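(* For every integer $s\geqslant2$, \[P(B_{3,s,3})=-\sum_{\mathrm S_1,\mathrm S_2,\mathrm S_3}(-1)^{\#\mathrm S_1+\#\mathrm S_2+\#\mathrm S_3}\,2^{-|T_1|}\,4^{-|T_{2-3}|},\] where the sum is over all ordered triples of nonempty sets of pairwise distinct paths from the centre to the boundary. The sets $T_1$, $T_{2-3}$, the notation $\#\mathrm S$ and the event $B_{3,s,3}$ are defined in the context.
   Context: Consider the tiling of the plane by regular hexagons of side $1$, called cells. For an integer $s\geqslant2$, fix a cell $O$. Let $M_s$ be the set of all cells lying inside the regular hexagon that is centred at the centre of $O$, has sides of length $s\sqrt3$, and has its sides perpendicular to sides of the cells. The set $M_s$ has $m+1=1+3s(s-1)$ cells. Number the cells other than $O$ as $v_1,\dots,v_m$. Two cells are neighbours if they share a side. A cell of $M_s$ is a boundary cell if it has fewer than six neighbours in $M_s$. A path from the centre to the boundary is a sequence of pairwise distinct cells $v_{j_1},\dots,v_{j_t}$ with the following properties: - $v_{j_1}$ is a neighbour of $O$; - $v_{j_l}$ and $v_{j_{l+1}}$ are neighbours for each $l$; - $v_{j_t}$ is a boundary cell. For a nonempty set $\mathrm S=\{s_1,\dots,s_k\}$ of pairwise distinct paths, define $\#\mathrm S=k$ and $\mathrm{Cells}(\mathrm S)=s_1\cup\dots\cup s_k$, the set of cells used. For a triple $(\mathrm S_1,\mathrm S_2,\mathrm S_3)$: - $T_1$ is the set of cells belonging to exactly one of $\mathrm{Cells}(\mathrm S_1),\mathrm{Cells}(\mathrm S_2),\mathrm{Cells}(\mathrm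 S_3)$; - $T_{2-3}$ is the set of cells belonging to at least two of them. Let $\Omega_{3,s}$ be the set of triples $(f_1,f_2,f_3)$ of functions $\{v_1,\dots,v_m\}\to\{0,1\}$ with $f_1+f_2+f_3\equiv1\pmod2$ at every cell, with the uniform probability measure. Fluid $i$ flows if some path from the centre to the boundary has $f_i=1$ on all its cells. $B_{3,s,3}$ is the event that all three fluids flow. *)

From mathcomp Require Import all_boot all_order all_algebra.
Set Implicit Arguments. Unset Strict Implicit. Unset Printing Implicit Defensive.
Import Order.TTheory GRing.Theory Num.Theory.

(* Cells of the hexagonal tiling are identified with axial coordinates
   (q, r) in Z^2; the six neighbours of (q,r) are (q+-1,r), (q,r+-1),
   (q+1,r-1), (q-1,r+1).  The cells of M_s are
   those at hex distance <= s-1 from O, i.e. |q|,|r|,|q+r| <= s-1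
   (1 + 3s(s-1) cells).  We store a cell of the box |q|,|r| <= s-1 as a pair
   of ordinals (x,y) : 'I_(2s-1) * 'I_(2s-1), with q = x-(s-1), r = y-(s-1). *)

Definition box (s : nat) : finType := ('I_(2 * s - 1) * 'I_(2 * s - 1))%type.

Definition axq (s : nat) (c : box s) : int := (c.1 : nat)%:Z - (s - 1)%:Z.
Definition axr (s : nat) (c : box s) : int := (c.2 : nat)%:Z - (s - 1)%:Z.

Definition inM (s : nat) (c : box s) : bool :=
  [&& `|axq c| <= (s - 1)%:Z, `|axr c| <= (s - 1)%:Z
    & `|axq c + axr c| <= (s - 1)%:Z]%R.

Definition isO (s : nat) (c : box s) : bool := (axq c == 0) && (axr c == 0).

Definition adj (s : nat) (c d : box s) : bool :=
  let dq := (axq d - axq c)%R in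
  let dr := (axr d - axr c)%R in
  [|| (dq == 1) && (dr == 0), (dq == -1) && (dr == 0),
      (dq == 0) && (dr == 1), (dq == 0) && (dr == -1),
      (dq == 1) && (dr == -1) | (dq == -1) && (dr == 1)]%R.

Definition boundary (s : nat) (c : box s) : bool :=
  #|[set d : box s | inM d && adj c d]| < 6.

Definition V (s : nat) : finType := {c : box s | inM c && ~~ isO c}.

Definition is_cpath (s : nat) (p : seq (V s)) : bool :=
  match p with
  | [::] => false
  | v :: p' =>
      [&& uniq p,
          [exists o : box s, isO o && adj o (val v)],
          path (fun a b : V s => adj (val a) (val b)) v p'
        & boundary (val (last v p'))]
  end.

(* paths are pairwise distinct, hence of length <= m = #|V s|; the finite
   type of all paths from the centre to the boundary *)
Definition Seqs (s : nat) : finType := {k : 'I_(#|V s|).+1 & k.-tuple (V s)}.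
Definition Path (s : nat) : finType := {t : Seqs s | is_cpath (tagged t)}.
Definition pseq (s : nat) (p : Path s) : seq (V s) := tagged (val p).

Definition Cells (s : nat) (S : {set Path s}) : {set V s} :=
  \bigcup_(p in S) [set x | x \in pseq p].

Definition mult (s : nat) (S1 S2 S3 : {set Path s}) (x : V s) : nat :=
  (x \in Cells S1) + (x \in Cells S2) + (x \in Cells S3).

Definition T1 (s : nat) (S1 S2 S3 : {set Path s}) : {set V s} :=
  [set x | mult S1 S2 S3 x == 1].
Definition T23 (s : nat) (S1 S2 S3 : {set Path s}) : {set V s} :=
  [set x | 2 <= mult S1 S2 S3 x].

Definition Conf (s : nat) :=
  ({ffun V s -> bool} * {ffun V s -> bool} * {ffun V s -> bool})%type.

Definition Omega (s : nat) : {set Conf s} :=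
  [set w : Conf s | [forall x, odd (w.1.1 x + w.1.2 x + w.2 x)]].

Definition flows (s : nat) (f : {ffun V s -> bool}) : bool :=
  [exists p : Path s, all (fun x => f x) (pseq p)].

Definition B333 (s : nat) : {set Conf s} :=
  [set w in Omega s | [&& flows w.1.1, flows w.1.2 & flows w.2]].

Definition Prob (s : nat) (E : {set Conf s}) : rat :=
  (#|E :&: Omega s|%:R / #|Omega s|%:R)%R.

(* Inclusion-exclusion over the open paths gives, for each fluid,
   [f flows] = - sum_(S <> {}) (-1)^#S [f = 1 on Cells S].  Multiplying the
   three expansions and summing over Omega, the term of (S1, S2, S3) counts
   the configurations whose i-th fluid is open on Cells Si.  That count
   factorises over the cells: the parity constraint leaves 4, 2, 1, 1 values
   of (f1, f2, f3) at a cell forced open for 0, 1, 2, 3 fluids, so the term is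
   4^m 2^-|T1| 4^-|T23|, while |Omega| = 4^m. *)

From mathcomp Require Import all_boot all_order all_algebra.
From mathcomp Require Import ring.
Import GRing.Theory Num.Theory.
Set Implicit Arguments. Unset Strict Implicit.
Local Open Scope ring_scope.

Section InclusionExclusion.
Variables (R : comPzRingType) (I : finType).

Lemma prod_1subr (g : I -> R) :
  \prod_i (1 - g i) = \sum_(J : {set I}) (-1) ^+ #|J| * \prod_(i in J) g i.
Proof.
rewrite (eq_bigr (fun i => - g i + 1)) => [|i _]; last by rewrite addrC.
by rewrite bigA_distr; apply: eq_bigr => J _; rewrite -big_mkcond prodrN.
Qed.

Lemma prod_natr_bool (J : {set I}) (P : pred I) :
  \prod_(i in J) (P i)%:R = [forall i in J, P i]%:R :> R.
Proof.
have [/forall_inP allJ | /forall_inPn [i iJ /negPf Pi]] := boolP [forall i in J, P i].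
  by rewrite big1 // => i /allJ ->.
by rewrite (bigD1 i) //= Pi mul0r.
Qed.

Lemma exists_inclusion_exclusion (P : pred I) :
  [exists i, P i]%:R
    = - \sum_(J : {set I} | J != set0) (-1) ^+ #|J| * [forall i in J, P i]%:R :> R.
Proof.
have none_prod : (~~ [exists i, P i])%:R = \prod_i (1 - (P i)%:R) :> R.
  have [/existsP [i Pi] | /existsPn nP] := boolP [exists i, P i].
    by rewrite (bigD1 i) //= Pi subrr mul0r.
  by rewrite big1 // => i _; rewrite (negPf (nP i)) subr0.
move: none_prod; rewrite prod_1subr (bigD1 set0) //= cards0 expr0 big_set0 mulr1.
under eq_bigr => J _ do rewrite prod_natr_bool.
set rest := \sum_(J | _) _.
case: [exists i, P i] => /= e.
  by rewrite -(addrK rest 1) -e sub0r.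
by move: e; rewrite -{1}(addr0 1) => /addrI <-; rewrite oppr0.
Qed.

End InclusionExclusion.

Lemma cells_subset_open s (S : {set Path s}) (f : {ffun V s -> bool}) :
  (Cells S \subset [set x | f x]) = [forall p in S, all f (pseq p)].
Proof.
apply/bigcupsP/forall_inP => onS p /onS.
  by move=> /subsetP sub; apply/allP => x xp; have := sub x; rewrite !inE; apply.
by move/allP=> allp; apply/subsetP => x; rewrite !inE => /allp.
Qed.

Lemma flows_inclusion_exclusion (R : comPzRingType) s (f : {ffun V s -> bool}) :
  (flows f)%:R = - \sum_(S : {set Path s} | S != set0)
                    (-1) ^+ #|S| * (Cells S \subset [set x | f x])%:R :> R.
Proof.
rewrite exists_inclusion_exclusion; congr (- _).
by apply: eq_bigr => S _; rewrite cells_subset_open.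
Qed.

Lemma card_bool3 (A : pred (bool * bool * bool)) :
  #|A| = (\sum_(a : bool) \sum_(b : bool) \sum_(c : bool) ((a, b, c) \in A))%N.
Proof.
rewrite -sum1_card big_mkcond pair_bigA pair_bigA.
by apply: eq_bigr => -[[a b] c].
Qed.

Lemma card_bool_triples (b1 b2 b3 : bool) :
  (#|[pred j : bool * bool * bool | odd (j.1.1 + j.1.2 + j.2)
        && [&& b1 ==> j.1.1, b2 ==> j.1.2 & b3 ==> j.2]]|
    * 2 ^ (b1 + b2 + b3 == 1) * 4 ^ (1 < b1 + b2 + b3) = 4)%N.
Proof. by rewrite card_bool3 !big_bool; case: b1; case: b2; case: b3. Qed.

Section CellwiseCount.
Variable T : finType.
Local Notation triple := ({ffun T -> bool} * {ffun T -> bool} * {ffun T -> bool})%type.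

Definition odd_triples : {set triple} :=
  [set w : triple | [forall x, odd (w.1.1 x + w.1.2 x + w.2 x)]].

Lemma card_triples_cellwise (A : T -> pred (bool * bool * bool)) :
  #|[set w : triple | [forall x, (w.1.1 x, w.1.2 x, w.2 x) \in A x]]|
  = (\prod_x #|A x|)%N.
Proof.
set unzip3 := fun f : {ffun T -> bool * bool * bool} =>
  ([ffun x => (f x).1.1], [ffun x => (f x).1.2], [ffun x => (f x).2]) : triple.
have unzip3_bij : bijective unzip3.
  exists (fun w : triple => [ffun x => (w.1.1 x, w.1.2 x, w.2 x)]).
    by move=> f; apply/ffunP => x; rewrite !ffunE; case: (f x) => [[]].
  by move=> [[f1 f2] f3]; congr (_, _, _); apply/ffunP => x; rewrite !ffunE.
have card_A x : #|A x| = (\sum_j (j \in A x))%N by rewrite -sum1_card big_mkcond.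
under eq_bigr => x _ do rewrite card_A.
rewrite bigA_distr_bigA -sum1_card big_mkcond (reindex unzip3) /=; last exact: onW_bij.
apply: eq_bigr => f _.
have unzip3K x : ((unzip3 f).1.1 x, (unzip3 f).1.2 x, (unzip3 f).2 x) = f x.
  by rewrite !ffunE -!surjective_pairing.
rewrite inE; under eq_forallb => x do rewrite unzip3K.
have [/forallP Af | /forallPn [x /negPf Afx]] := boolP [forall x, f x \in A x].
  by rewrite big1 // => x _; rewrite Af.
by rewrite (bigD1 x) //= Afx.
Qed.

Lemma prodn_exp_mem (S : {set T}) (n : nat) : (n ^ #|S| = \prod_x n ^ (x \in S))%N.
Proof. by rewrite -prod_nat_const big_mkcond; apply: eq_bigr => x _; case: (x \in S). Qed.

Variables C1 C2 C3 : {set T}.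
Let cover x := ((x \in C1) + (x \in C2) + (x \in C3))%N.

Lemma card_odd_triples_containing :
  (#|[set w : triple in odd_triples | [&& C1 \subset [set x | w.1.1 x],
        C2 \subset [set x | w.1.2 x] & C3 \subset [set x | w.2 x]]]|
   * 2 ^ #|[set x | cover x == 1]| * 4 ^ #|[set x | 1 < cover x]| = 4 ^ #|T|)%N.
Proof.
pose A x := [pred j : bool * bool * bool | odd (j.1.1 + j.1.2 + j.2)
  && [&& (x \in C1) ==> j.1.1, (x \in C2) ==> j.1.2 & (x \in C3) ==> j.2]].
rewrite (_ : [set w in odd_triples | _]
  = [set w : triple | [forall x, (w.1.1 x, w.1.2 x, w.2 x) \in A x]]); last first.
  apply/setP => w; rewrite !inE; apply/andP/forallP => [[/forallP odd_w] | Aw].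
    move=> /and3P[/subsetP s1 /subsetP s2 /subsetP s3] x; rewrite inE /= odd_w /=.
    by apply/and3P; split; apply/implyP; [move/s1 | move/s2 | move/s3]; rewrite inE.
  split; first by apply/forallP => x; case/andP: (Aw x).
  have forced x : [&& (x \in C1) ==> w.1.1 x, (x \in C2) ==> w.1.2 x & (x \in C3) ==> w.2 x].
    by case/andP: (Aw x).
  by apply/and3P; split; apply/subsetP => x Cx; rewrite inE; case/and3P: (forced x); rewrite Cx.
rewrite card_triples_cellwise !prodn_exp_mem -!big_split /= -prod_nat_const.
by apply: eq_big => // x _; rewrite !inE card_bool_triples.
Qed.

End CellwiseCount.

Lemma card_odd_triples (T : finType) : #|odd_triples T| = (4 ^ #|T|)%N.
Proof.
rewrite -(card_odd_triples_containing set0 set0 set0).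
rewrite (_ : [set x | _ == 1%N] = set0); last by apply/setP => x; rewrite !inE.
rewrite (_ : [set x | 1 < _]%N = set0); last by apply/setP => x; rewrite !inE.
rewrite !cards0 !muln1 (_ : [set w in odd_triples T | _] = odd_triples T) //.
by apply/setP => w; rewrite !inE !(sub0set (T:=T)) /= andbT.
Qed.

Lemma Omega_odd_triples s : Omega s = odd_triples (V s).
Proof. by []. Qed.

Lemma card_Omega_open s (S1 S2 S3 : {set Path s}) :
  #|[set w in Omega s | [&& Cells S1 \subset [set x | w.1.1 x],
       Cells S2 \subset [set x | w.1.2 x] & Cells S3 \subset [set x | w.2 x]]]|%:R
  = #|Omega s|%:R * (2%:R ^- #|T1 S1 S2 S3| * 4%:R ^- #|T23 S1 S2 S3|) :> rat.
Proof.
have := card_odd_triples_containing (Cells S1) (Cells S2) (Cells S3).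
rewrite -card_odd_triples -Omega_odd_triples => /(congr1 (fun n => n%:R : rat)).
rewrite !natrM !natrX -/(T1 S1 S2 S3) -/(T23 S1 S2 S3) => <-.
have nz (k n : nat) : (k.+1%:R ^+ n : rat) != 0 by rewrite expf_neq0 ?pnatr_eq0.
by rewrite mulrA [_ / _]mulrAC !mulfK.
Qed.

Lemma mulr_oppsum3 (R : comPzRingType) (I : finType) (P : pred I) (a : R)
    (F G H : I -> R) :
  a * ((- \sum_(i | P i) F i) * ((- \sum_(j | P j) G j) * (- \sum_(k | P k) H k)))
  = - \sum_(i | P i) \sum_(j | P j) \sum_(k | P k) a * (F i * (G j * H k)).
Proof.
rewrite mulrNN mulNr mulrN; congr (- _).
rewrite big_distrl /= mulr_sumr; apply: eq_bigr => i _.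
rewrite big_distrl /= !mulr_sumr; apply: eq_bigr => j _.
by rewrite !mulr_sumr.
Qed.

Lemma natr_card (R : pzSemiRingType) (T : finType) (A : {set T}) :
  #|A|%:R = \sum_x (x \in A)%:R :> R.
Proof. by rewrite -sumr_const big_mkcond; apply: eq_bigr => x _; case: (x \in A). Qed.

Lemma card_B333 s :
  #|B333 s|%:R = #|Omega s|%:R *
    - \sum_(S1 : {set Path s} | S1 != set0)
        \sum_(S2 : {set Path s} | S2 != set0)
          \sum_(S3 : {set Path s} | S3 != set0)
            (-1) ^+ (#|S1| + #|S2| + #|S3|)%N
            * (2%:R ^- #|T1 S1 S2 S3|) * (4%:R ^- #|T23 S1 S2 S3|) :> rat.
Proof.
rewrite natr_card.
under eq_bigr => w _ do
  rewrite inE -!mulnb !natrM !flows_inclusion_exclusion mulr_oppsum3.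
rewrite sumrN mulrN; congr (- _); rewrite exchange_big mulr_sumr.
apply: eq_bigr => S1 _; rewrite exchange_big mulr_sumr.
apply: eq_bigr => S2 _; rewrite exchange_big mulr_sumr.
apply: eq_bigr => S3 _.
rewrite -mulrA mulrCA -card_Omega_open natr_card mulr_sumr; apply: eq_bigr => w _.
rewrite inE -!mulnb !natrM !exprD.
(* Abstract the atoms first: [ring] would otherwise try to normalise the cardinalities. *)
move: ((-1) ^+ #|S1|) ((-1) ^+ #|S2|) ((-1) ^+ #|S3|) (w \in Omega s)%:R => e1 e2 e3 a.
by move: (Cells S1 \subset _)%:R (Cells S2 \subset _)%:R (Cells S3 \subset _)%:R => o1 o2 o3; ring.
Qed.

Theorem proposition2 (s : nat) (hs : (2 <= s)%N) :
  Prob (B333 s) =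
  - \sum_(S1 : {set Path s} | S1 != set0)
      \sum_(S2 : {set Path s} | S2 != set0)
        \sum_(S3 : {set Path s} | S3 != set0)
          (-1) ^+ (#|S1| + #|S2| + #|S3|)%N
          * (2%:R ^- #|T1 S1 S2 S3|) * (4%:R ^- #|T23 S1 S2 S3|).
Proof.
(* The identity holds for every s. *)
have B_Omega : B333 s :&: Omega s = B333 s.
  by apply/setIidPl/subsetP => w; rewrite inE => /andP[].
have Omega_neq0 : #|Omega s|%:R != 0 :> rat.
  by rewrite Omega_odd_triples card_odd_triples pnatr_eq0 expn_eq0.
by rewrite /Prob B_Omega card_B333 mulrAC divff ?mul1r.
Qed.
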